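(* Let $G$ be a maximal $1$-plane graph with at least $4$ vertices in which every edge lies in some $K_4$-subgraph, and let $\{G_i\}_{i\in\{0,\dots,N\}}$ be a $K_4$-extension sequence of $G$ determined by the SWM*-rule, with $G_i=G[V(G_{i-1})\cup V(F_i)]$. For $i\in\{1,\dots,N\}$ let $F_i'$ be the subgraph of $G_i$ induced by the edge set $E(G_i)\setminus E(G_{i-1})$. Let $i\in\{1,\dots,N\}$ and $e\in E(F_i)$. Then every cut-vertex $w$ of $F_i'-e$ lies in $V(F_i)\setminus V(G_{i-1})$, and each component of $F_i'-e-w$ contains vertices of $G_{i-1}$.
   Context: A $1$-plane graph is a simple graph drawn in the plane (vertices distinct points, edges arcs joining their ends, no edge crossing itself, two edges crossing at most once, adjacent edges not crossing) so that every edge is crossed at most once; it is maximal if no edge joining two non-adjacent vertices can be added so that the result is still a simple $1$-plane graph. An edge is clean if it crosses no other edge. If edge $ux$ crosses another edge at point $\alpha$, the arc $u\alpha$ is the near half-edge of $ux$ incident with $u$. Two edge segments are consecutive on the boundary of a face if they are consecutive on one of the closed walks forming that boundary. $G[A]$ is the subgraph induced by $A$ (a vertex set), and for an edge set $A$, the subgraph induced by $A$ has edge set $A$ and vertex set the ends of edges in $A$. For a vertex-induced subgraph $G'$ and a $K_4$-subgraph $F$ of $G$ with $1\le|V(F)\cap V(G')|\le 3$, $F$ is a strong/weak/micro $K_4$-link from $G'$ when $|V(F)\cap V(G')|=3/2/1$, and $G[V(G')\cup V(F)]$ is the corresponding $K_4$-extension of $G'$. SWM*-rule for a proper vertex-induced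 subgraph $G'$: choose any strong $K_4$-link from $G'$ if one exists; otherwise any weak one if one exists; otherwise choose $u\in V(G')$ with $N_G(u)\not\subseteq V(G')$, then $x\in N_G(u)\setminus V(G')$ such that for some $w\in N_G(u)\cap V(G')$ the edge $ux$ (or its near half-edge at $u$) and $uw$ (or its near half-edge at $u$) are consecutive on the boundary of some face of $G$; if $ux$ is clean choose any $K_4$-subgraph containing $ux$, and if $ux$ crosses edge $st$ choose $G[\{u,x,s,t\}]$. A $K_4$-extension sequence determined by the SWM*-rule is $G_0\cong K_4$, $G_N=G$, $G_i=G[V(G_{i-1})\cup V(F_i)]$ with $F_i$ a $K_4$-link from $G_{i-1}$ chosen by the SWM*-rule. *)

From mathcomp Require Import all_boot.
Set Implicit Arguments. Unset Strict Implicit. Unset Printing Implicit Defensive.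

Definition simple_graph (V : finType) (adj : rel V) : Prop :=
  (forall x, ~~ adj x x) /\ (forall x y, adj x y = adj y x).

(* K is the vertex set of a K4-subgraph (in a simple graph the K4-subgraph is
   determined by its 4 vertices; its edges are the 6 pairs). *)
Definition isK4 (V : finType) (adj : rel V) (K : {set V}) : Prop :=
  #|K| = 4 /\ {in K &, forall x y, x != y -> adj x y}.

(* 1-plane drawings, encoded combinatorially by the planarization: the       *)
(* planar map obtained by turning every crossing point into a degree-4 node. *)
(* Darts D; al = the fixed-point-free involution pairing the two darts of a  *)
(* planarization edge; sg = rotation (next dart counter-clockwise around the *)
(* node); nd d = Some v if the node of d is the vertex v, None if it is a    *)
(* crossing point.  Faces = orbits of phi = sg \o al.                        *)
Section Drawing.
Variables (V D : finType) (adj : rel V) (al sg : D -> D) (nd : D -> option V).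

Definition phi (d : D) : D := sg (al d).

Definition norb (f : D -> D) : nat := #|[set [set y | fconnect f x y] | x : D]|.

(* far end (a vertex of G) of the edge of G whose near part at the node of d
   is the dart d; d is assumed to sit at a vertex node *)
Definition far (d : D) : option V :=
  if nd (al d) is Some x then Some x else nd (al (sg (sg (al d)))).

(* the edge of G through the dart d (at a vertex) is clean *)
Definition clean_dart (d : D) : bool := nd (al d) != None.

Definition on_face (x : V) (d : D) : Prop :=
  exists d', nd d' = Some x /\ fconnect phi d d'.

Definition one_plane : Prop :=
  [/\ (* planar map of genus 0, connected *)
      [/\ (forall d, al (al d) = d), (forall d, al d != d),
      injective sg,
      (forall d d', connect (fun x y => (y == al x) || (y == sg x)) d d') &
      norb sg + norb phi = #|D|./2 + 2],
      (* nodes: vertices correspond exactly to the sg-orbits labelled Some *)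
      [/\ forall d, nd (sg d) = nd d,
          forall d d' v, nd d = Some v -> nd d' = Some v -> fconnect sg d d' &
          forall v, exists d, nd d = Some v],
      (* crossing nodes: degree 4, adjacent (in the planarization) to vertices
         only, the two crossing edges have four distinct ends *)
      (forall d, nd d = None ->
         [/\ sg (sg (sg (sg d))) = d, sg d != d, sg (sg d) != d,
             (forall k, k < 4 -> nd (al (iter k sg d)) != None) &
             uniq [seq nd (al (iter k sg d)) | k <- iota 0 4]]) &
      (* the edges of G are exactly the edges of the drawing, without
         multiple edges *)
      (forall u x, adj u x <-> exists d, nd d = Some u /\ far d = Some x) /\
      (forall d d' u, nd d = Some u -> nd d' = Some u -> far d = far d' -> d = d')].

(* Maximality: no edge xy between distinct non-adjacent vertices can be added
   keeping a simple 1-plane graph.  Such an edge can be added iff either x and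
   y lie on a common face (clean new edge), or the new edge can cross exactly
   one clean edge st with {s,t} disjoint from {x,y}, passing from a face on
   one side of st containing x to the face on the other side containing y. *)
Definition maximal_one_plane : Prop :=
  one_plane /\
  forall x y, x != y -> ~~ adj x y ->
    ~ (exists d, on_face x d /\ on_face y d) /\
    ~ (exists d s t, [/\ nd d = Some s, nd (al d) = Some t,
                         x \notin [:: s; t], y \notin [:: s; t] &
                         on_face x d /\ on_face y (al d)]).

Definition strong_link (S F : {set V}) : Prop := isK4 adj F /\ #|F :&: S| = 3.
Definition weak_link (S F : {set V}) : Prop := isK4 adj F /\ #|F :&: S| = 2.
Definition K4_link (S F : {set V}) : Prop :=
  isK4 adj F /\ 1 <= #|F :&: S| <= 3.

(* micro step of the SWM*-rule: u in S, x a neighbour of u outside S, w a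
   neighbour of u in S such that the darts (edges or near half-edges) of ux
   and uw at u are consecutive in the rotation at u, i.e. consecutive on the
   boundary walk of the face containing that corner; if ux is clean F is any
   K4 containing u and x, otherwise F = {u,x,s,t} where st crosses ux. *)
Definition micro_choice (S F : {set V}) : Prop :=
  exists u x w d1 d2,
    [/\ [&& u \in S, x \notin S & w \in S],
        [/\ nd d1 = Some u, far d1 = Some x, nd d2 = Some u & far d2 = Some w],
        (d2 = sg d1 \/ d1 = sg d2) &
        (if clean_dart d1 then u \in F /\ x \in F
         else exists s t, [/\ nd (al (sg (al d1))) = Some s,
                              nd (al (sg (sg (sg (al d1))))) = Some t &
                              F = [set u; x; s; t]])].

Definition swm_rule (S F : {set V}) : Prop :=
  K4_link S F /\
  [\/ #|F :&: S| = 3,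
      #|F :&: S| = 2 /\ ~ (exists F', strong_link S F') |
      [/\ ~ (exists F', strong_link S F'), ~ (exists F', weak_link S F')
        & micro_choice S F]].

(* K4-extension sequence determined by the SWM*-rule, given by the vertex
   sets S i = V(G_i) and the links F i (i = 1..N). *)
Definition swm_sequence (N : nat) (S F : nat -> {set V}) : Prop :=
  [/\ isK4 adj (S 0), S N = [set: V] &
      forall i, 1 <= i <= N -> S i = S i.-1 :|: F i /\ swm_rule (S i.-1) (F i)].

End Drawing.

(* Components and cut-vertices of a graph given by a vertex set A and an     *)
(* edge relation r (only edges with both ends in A are used).               *)
Definition rel_in (V : finType) (A : {set V}) (r : rel V) : rel V :=
  fun u v => [&& u \in A, v \in A & r u v].

Definition components (V : finType) (A : {set V}) (r : rel V) : {set {set V}} :=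
  [set [set y in A | connect (rel_in A r) x y] | x in A].

Definition cut_vertex (V : finType) (A : {set V}) (r : rel V) (w : V) : Prop :=
  w \in A /\ #|components A r| < #|components (A :\ w) r|.

(* F_i' : the subgraph induced by the edge set E(G_i) \ E(G_{i-1}) *)
Definition new_edge (V : finType) (adj : rel V) (Sold Snew : {set V}) : rel V :=
  fun x y => [&& adj x y, x \in Snew, y \in Snew & ~~ ((x \in Sold) && (y \in Sold))].

Definition new_verts (V : finType) (adj : rel V) (Sold Snew : {set V}) : {set V} :=
  [set x | [exists y, new_edge adj Sold Snew x y]].

Definition new_edge_minus (V : finType) (adj : rel V) (Sold Snew : {set V})
  (a b : V) : rel V :=
  fun x y => new_edge adj Sold Snew x y && ([set x; y] != [set a; b]).

(** Every new edge of [G_i] has an end in [X = V(F_i) \ V(G_{i-1})], and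
    [F_i] is a clique on at least four vertices meeting both [X] and
    [V(G_{i-1})].  Deleting a vertex [u] outside [X] cannot disconnect
    anything: the neighbours of [u] all lie in [X], and [X] stays connected in
    [F_i' - e - u] because two vertices of [X] joined by the missing edge [e]
    are still linked through a fourth vertex of the clique.  For the same
    reason every vertex of [X] other than [w] reaches [V(G_{i-1})] by a path of
    length at most two inside [F_i] that avoids [w] and [e]. *)

From mathcomp Require Import all_boot.

Set Implicit Arguments.
Unset Strict Implicit.
Unset Printing Implicit Defensive.

Lemma set2_neq (T : finType) (x y : T) (B : {set T}) :
  y \notin B -> [set x; y] != B.
Proof. by apply: contraNneq => <-; rewrite !inE eqxx orbT. Qed.

Lemma card_set3_le (T : finType) (x y z : T) : #|[set x; y; z]| <= 3.
Proof.
apply: leq_trans (card_size [:: x; y; z]).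
by apply: subset_leq_card; apply/subsetP => t; rewrite !inE -orbA.
Qed.

Section Components.

Variables (V : finType) (r : rel V).
Hypothesis r_sym : symmetric r.

Lemma rel_in_sym (B : {set V}) : symmetric (rel_in B r).
Proof. by move=> x y; rewrite /rel_in r_sym andbCA. Qed.

Lemma connect_rel_in_sym (B : {set V}) : connect_sym (rel_in B r).
Proof. exact/sym_connect_sym/rel_in_sym. Qed.

Section DeleteVertex.

Variables (A : {set V}) (u : V).
Hypothesis nbh_connected :
  {in A :\ u &, forall x y, r u x -> r u y -> connect (rel_in (A :\ u) r) x y}.

(* A path through [u] is rerouted between the neighbours of [u] it uses. *)
Lemma connect_setD1 :
  {in A :\ u &, forall x y, connect (rel_in A r) x y ->
                            connect (rel_in (A :\ u) r) x y}.
Proof.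
move=> x y xA yA /connectP [p pth yE]; rewrite {y}yE in yA *.
set c := connect (rel_in (A :\ u) r).
pose Q z :=
  (z != u -> c x z) /\ (z = u -> {in A :\ u, forall t, r u t -> c x t}).
have Q_step z z' : rel_in A r z z' -> Q z -> Q z'.
  move=> /and3P [zA z'A rzz'] [Qz Qu]; split=> [z'u | z'E t tA rut].
    have [zu | zu] := eqVneq z u.
      by apply: Qu => //; [rewrite !inE z'u | rewrite -zu].
    apply: connect_trans (Qz zu) (connect1 _).
    by rewrite /rel_in !inE zu z'u zA z'A.
  have [zu | zu] := eqVneq z u; first exact: Qu.
  apply: connect_trans (Qz zu) (nbh_connected _ tA _ rut).
    by rewrite !inE zu.
  by rewrite r_sym -z'E.
have Q_path z q : path (rel_in A r) z q -> Q z -> Q (last z q).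
  elim: q z => [|z' q IHq] z //= /andP [rzz' pth'] Qz.
  exact: IHq pth' (Q_step _ _ rzz' Qz).
have Qx : Q x.
  by split=> [_ | xu]; [exact: connect0 | move: xA; rewrite xu !inE eqxx].
by case: (Q_path _ _ pth Qx) => + _; apply; case/setD1P: yA.
Qed.

Lemma card_components_setD1 : #|components (A :\ u) r| <= #|components A r|.
Proof.
pose comp (B : {set V}) x := [set y in B | connect (rel_in B r) x y].
pose restrict C := comp (A :\ u) (odflt u [pick z in C :&: (A :\ u)]).
have comp_restrict : {in A :\ u, comp (A :\ u) =1 restrict \o comp A}.
  move=> x xA; rewrite /restrict /=.
  case: pickP => [z /setIP [xz zA] | none] /=.
    have cxz : connect (rel_in (A :\ u) r) x z.
      by apply: connect_setD1 => //; move: xz; rewrite inE => /andP [].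
    apply/setP => y; rewrite !inE.
    by rewrite (same_connect (connect_rel_in_sym _) cxz).
  by case/setD1P: xA => xu xA; move: (none x); rewrite !inE xu xA connect0.
apply: (@leq_trans #|[set comp A x | x in A :\ u]|).
  by rewrite /components (eq_in_imset comp_restrict) imset_comp leq_imset_card.
by apply/subset_leq_card/imsetS/subD1set.
Qed.

End DeleteVertex.

End Components.

Lemma new_verts_sub (V : finType) (adj : rel V) (Sold Snew : {set V}) :
  {subset new_verts adj Sold Snew <= Snew}.
Proof. by move=> v; rewrite inE => /existsP [y /and4P []]. Qed.

Section CliqueExtension.

Variables (V : finType) (adj : rel V) (Sold K : {set V}) (a b : V).
Hypothesis adj_sym : symmetric adj.
Hypothesis K_clique : {in K &, forall x y, x != y -> adj x y}.
Hypothesis K_big : 4 <= #|K|.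
Hypothesis K_meets_old : 0 < #|K :&: Sold|.
Hypothesis K_meets_new : #|K :&: Sold| < #|K|.

Local Notation Snew := (Sold :|: K).
Local Notation X := (K :\: Sold).
Local Notation A := (new_verts adj Sold Snew).
Local Notation r := (new_edge_minus adj Sold Snew a b).

Lemma new_edge_minus_sym : symmetric r.
Proof.
move=> x y; rewrite /new_edge_minus /new_edge adj_sym (setUC [set y]).
by case: (x \in Snew) (y \in Snew) (x \in Sold) (y \in Sold) => [] [] [] [].
Qed.

Lemma new_edge_minus_K x y :
  x \in X -> y \in K -> x != y -> [set x; y] != [set a; b] -> r x y.
Proof.
case/setDP=> xK xS yK xy exy.
rewrite /new_edge_minus /new_edge exy K_clique //.
by rewrite !inE xK yK (negbTE xS) !orbT.
Qed.

Lemma new_edge_minus_notin_X u y : r u y -> u \notin X -> y \in X.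
Proof.
case/andP=> /and4P [_ uS yS old] _ uX.
have uSold : u \in Sold.
  case/setUP: uS => // uK; apply: contraR uX => uS; by rewrite inE uS uK.
rewrite uSold /= in old; rewrite inE old.
by case/setUP: yS => // ySold; rewrite ySold in old.
Qed.

Lemma K_sub_new_verts : K \subset A.
Proof.
have [p pKS] : exists p, p \in K :&: Sold by apply/set0Pn; rewrite -card_gt0.
have [x xX] : exists x, x \in X.
  by apply/set0Pn; rewrite -card_gt0 -(ltn_add2l #|K :&: Sold|) addn0 cardsID.
apply/subsetP => v vK; rewrite inE; apply/existsP.
have [vS | vS] := boolP (v \in Sold).
  have /setDP [xK xS] := xX.
  exists x; rewrite /new_edge K_clique ?(negbTE xS) ?andbF
    ?inE ?vK ?xK ?orbT //.
  by apply: contraNneq xS => <-.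
have /setIP [pK pS] := pKS.
exists p; rewrite /new_edge K_clique ?(negbTE vS) ?inE ?vK ?pK ?orbT //.
by apply: contraNneq vS => ->.
Qed.

Lemma K_new_verts_setD1 u v : v \in K -> v != u -> v \in A :\ u.
Proof. by move=> vK vu; rewrite in_setD1 vu (subsetP K_sub_new_verts). Qed.

Lemma K_notin_set3 x y u : exists2 z, z \in K & z \notin [set x; y; u].
Proof.
have : ~~ (K \subset [set x; y; u]).
  apply: contraL K_big => /subset_leq_card K_le.
  by rewrite -ltnNge ltnS (leq_trans K_le) ?card_set3_le.
by case/subsetPn => z; exists z.
Qed.

Lemma connect_X_K (B : {set V}) x y :
  x \in B -> y \in B -> x \in X -> y \in K -> x != y ->
  [set x; y] != [set a; b] -> connect (rel_in B r) x y.
Proof.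
move=> xB yB xX yK xy ne; apply: connect1.
by rewrite /rel_in xB yB new_edge_minus_K.
Qed.

Lemma X_connected u :
  u \notin X -> {in X &, forall x y, connect (rel_in (A :\ u) r) x y}.
Proof.
move=> uX x y xX yX.
have inA z : z \in X -> z \in A :\ u.
  move=> zX; apply: K_new_verts_setD1; first by case/setDP: zX.
  by apply: contraNneq uX => <-.
have [xA yA] := (inA x xX, inA y yX).
have [-> | xy] := eqVneq x y; first exact: connect0.
have [ne | /negPn /eqP e] := boolP ([set x; y] != [set a; b]).
  by apply: connect_X_K => //; case/setDP: yX.
have [z zK] := K_notin_set3 x y u.
rewrite !inE !negb_or => /andP [/andP [zx zy] zu].
have zA : z \in A :\ u by apply: K_new_verts_setD1.
have zne : z \notin [set a; b] by rewrite -e !inE negb_or zx.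
apply: (connect_trans (y := z)).
  by apply: connect_X_K => //; [rewrite eq_sym | exact: set2_neq].
rewrite (connect_rel_in_sym new_edge_minus_sym).
by apply: connect_X_K => //; [rewrite eq_sym | exact: set2_neq].
Qed.

Lemma cut_vertex_in_X w : cut_vertex A r w -> w \in X.
Proof.
case=> _ cut; apply/negPn/negP => wX; move: cut; apply/negP; rewrite -leqNgt.
apply: card_components_setD1 => [|x y _ _ rwx rwy].
  exact: new_edge_minus_sym.
have [xX yX] := (new_edge_minus_notin_X rwx wX, new_edge_minus_notin_X rwy wX).
exact: X_connected.
Qed.

Lemma components_meet_old w :
  w \notin Sold -> {in components (A :\ w) r, forall C, C :&: Sold != set0}.
Proof.
move=> wS _ /imsetP [x xA ->].
suff [p [pS pA cxp]] : exists p,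
    [/\ p \in Sold, p \in A :\ w & connect (rel_in (A :\ w) r) x p].
  by apply/set0Pn; exists p; rewrite in_setI in_set pA cxp pS.
have [xS | xS] := boolP (x \in Sold); first by exists x; rewrite connect0.
have xX : x \in X.
  case/setD1P: xA => _ /new_verts_sub /setUP [xS' | xK].
    by rewrite xS' in xS.
  by rewrite inE xS xK.
have [p0 /setIP [p0K p0S]] : exists p, p \in K :&: Sold.
  by apply/set0Pn; rewrite -card_gt0.
have p0A : p0 \in A :\ w.
  by apply: K_new_verts_setD1 => //; apply: contraNneq wS => <-.
have xp0 : x != p0 by apply: contraNneq xS => ->.
have [ne | /negPn /eqP e] := boolP ([set x; p0] != [set a; b]).
  by exists p0; rewrite connect_X_K.
have [z zK] := K_notin_set3 x p0 w.
rewrite !inE !negb_or => /andP [/andP [zx zp0] zw].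
have zA : z \in A :\ w by apply: K_new_verts_setD1.
have zne : z \notin [set a; b] by rewrite -e !inE negb_or zx.
have cxz : connect (rel_in (A :\ w) r) x z.
  by apply: connect_X_K; rewrite // ?set2_neq // eq_sym.
have [zS | zS] := boolP (z \in Sold); first by exists z.
exists p0; split=> //; apply: connect_trans cxz _.
by apply: connect_X_K; rewrite // ?inE ?zS // setUC set2_neq.
Qed.

End CliqueExtension.

Theorem lemma4p4 (V D : finType) (adj : rel V) (al sg : D -> D)
  (nd : D -> option V)
  (N : nat) (S F : nat -> {set V}) (i : nat) (a b w : V) :
  simple_graph adj ->
  maximal_one_plane adj al sg nd ->
  4 <= #|V| ->
  (forall x y, adj x y -> exists K, isK4 adj K /\ x \in K /\ y \in K) ->
  swm_sequence adj al sg nd N S F ->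
  1 <= i <= N ->
  a \in F i -> b \in F i -> a != b ->
  cut_vertex (new_verts adj (S i.-1) (S i))
             (new_edge_minus adj (S i.-1) (S i) a b) w ->
  w \in F i :\: S i.-1 /\
  (forall C, C \in components (new_verts adj (S i.-1) (S i) :\ w)
                              (new_edge_minus adj (S i.-1) (S i) a b) ->
             C :&: S i.-1 != set0).
Proof.
move=> [_ adj_sym] _ _ _ [_ _ extension] iN _ _ _ cut_w.
have [S_i [[[K4 K_clique] /andP [old_gt0 old_le3]] _]] := extension i iN.
have K_big : 4 <= #|F i| by rewrite K4.
have old_lt : #|F i :&: S i.-1| < #|F i| by rewrite K4.
rewrite S_i in cut_w *.
have wX := cut_vertex_in_X adj_sym K_clique K_big old_gt0 old_lt cut_w.
split=> //; apply: (components_meet_old K_clique K_big old_gt0 old_lt).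
by case/setDP: wX.
Qed.
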